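(* Let $b\ge 2$ and $n\ge 0$ be integers. Then $$g(T_b(n)) = \frac{(b^{3}+b^{2}-b-1)\,b^{2n} + \{(n-1)(b^{2}-1)-2\}\,b^{n} - 2b + 4}{2}.$$
   Context: For integers $b\ge 2$, $n\ge 0$ and $i\ge 0$ put $s_i=(b+1)b^{n+i}-1$, and let $T_b(n)=\langle\{s_i : i\in\mathbb{N}\}\rangle$ be the submonoid of $(\mathbb{N},+)$ generated by these numbers (a numerical semigroup). For a numerical semigroup $S$, the genus $g(S)$ is the cardinality of $\mathbb{N}\setminus S$. *)

From mathcomp Require Import all_boot all_order all_algebra.
Set Implicit Arguments. Unset Strict Implicit. Unset Printing Implicit Defensive.

Definition s_gen (b n i : nat) : nat := (b + 1) * b ^ (n + i) - 1.

Inductive in_submonoid (G : nat -> Prop) : nat -> Prop :=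
  | sm_zero : in_submonoid G 0
  | sm_add : forall g x, G g -> in_submonoid G x -> in_submonoid G (g + x).

Definition T (b n : nat) : nat -> Prop :=
  in_submonoid (fun x => exists i, x = s_gen b n i).

Definition has_genus (S : nat -> Prop) (g : nat) : Prop :=
  exists l : seq nat, uniq l /\ (forall x, x \in l <-> ~ S x) /\ size l = g.

From mathcomp Require Import all_boot all_order all_algebra zify ring.
Import GRing.Theory Num.Theory.
Set Implicit Arguments. Unset Strict Implicit. Unset Printing Implicit Defensive.

(* Write λ(M) = Σ_{k≥1} ⌊M/b^k⌋ ([legendre b M]) and m = s_0 = (b+1)b^n - 1.
   Then s_i = m b^i + (b-1) λ(b^i); since λ is superadditive and every
   t ≤ λ(M) is a sum of values λ(b^i) over powers b^i adding up to M, the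
   semigroup is T = {mM + (b-1)t : t ≤ λ(M)}.  As b-1 is invertible modulo m,
   the least element of T congruent to (b-1)t (0 ≤ t < m) is
   w_t = m μ(t) + (b-1)t ([apery]), where μ(t) ([legendre_inv]) is the least M
   with t ≤ λ(M).  Selmer's formula g = Σ_t ⌊w_t/m⌋ splits into
   Σ_t ⌊(b-1)t/m⌋ = (b-2)(m-1)/2 and Σ_t μ(t) = L(m-1) - Σ_{M<L} λ(M), where
   L = (b²-1)b^n is where λ reaches m-1; the last sum follows from
   Σ_{M<bN} λ(M) = b Σ_{M<N} λ(M) + bN(N-1)/2. *)

Lemma mul2_sum_nat m : 2 * \sum_(0 <= t < m) t = m * m.-1.
Proof.
elim: m => [|m IH]; first by rewrite big_geq.
by rewrite big_nat_recr //= mulnDr IH; case: m {IH} => //= m; nia.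
Qed.

Lemma sum_nat_ltn c N : c <= N -> \sum_(0 <= i < N) (i < c) = c.
Proof.
move=> le_cN; rewrite (big_cat_nat (leq0n c) le_cN) /=.
rewrite [X in _ + X]big1_seq => [|i /andP[_]]; last first.
  by rewrite mem_index_iota => /andP[le_ci _]; rewrite ltnNge le_ci.
rewrite addn0 -[RHS]muln1 -[c in RHS]subn0 -sum_nat_const_nat.
by apply: eq_big_nat => i /andP[_ ->].
Qed.

Lemma sum_nat_gtn c N : c < N -> \sum_(0 <= i < N) (c < i) = N - c.+1.
Proof.
move=> lt_cN; have total : \sum_(0 <= i < N) ((c < i) + (i < c.+1)) = N.
  rewrite -[N in RHS]subn0 -[N - 0]muln1 -sum_nat_const_nat.
  by apply: eq_bigr => i _; rewrite ltnS; case: leqP.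
by rewrite -[in RHS]total big_split /= (sum_nat_ltn lt_cN) addnK.
Qed.

Lemma coprime_mulmod_inj a m t1 t2 : coprime a m -> t1 < m -> t2 < m ->
  a * t1 = a * t2 %[mod m] -> t1 = t2.
Proof.
move=> coam; wlog le21 : t1 t2 / t2 <= t1.
  move=> hw lt1 lt2 E; case: (leqP t2 t1) => [le21|/ltnW le12]; first exact: hw.
  exact/esym/(hw t2 t1 le12 lt2 lt1 (esym E)).
move=> lt1 lt2 /eqP; rewrite eqn_mod_dvd; last by rewrite leq_mul2l le21 orbT.
rewrite -mulnBr Gauss_dvdr ?(coprime_sym m a) // -eqn_mod_dvd //.
by rewrite !modn_small // => /eqP.
Qed.

Lemma perm_iota_mulmod a m : coprime a m ->
  perm_eq [seq a * t %% m | t <- iota 0 m] (iota 0 m).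
Proof.
move=> coam; have uniq_mulmod : uniq [seq a * t %% m | t <- iota 0 m].
  rewrite map_inj_in_uniq ?iota_uniq // => t1 t2.
  by rewrite !mem_iota => /andP[_ lt1] /andP[_ lt2]; apply: coprime_mulmod_inj.
have sub_iota : {subset [seq a * t %% m | t <- iota 0 m] <= iota 0 m}.
  move=> _ /mapP[t tm ->]; move: tm; rewrite mem_iota => /andP[_ ltm].
  by rewrite mem_iota ltn_mod (leq_ltn_trans _ ltm).
apply: uniq_perm (iota_uniq 0 m) _ => //.
by have [] := uniq_min_size uniq_mulmod sub_iota; rewrite ?size_map.
Qed.

Lemma sum_divn_coprime a m : coprime a m ->
  2 * \sum_(0 <= t < m) (a * t %/ m) = a.-1 * m.-1.
Proof.
move=> coam; have [m0|m_gt0] := posnP m; first by rewrite m0 big_geq // !muln0.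
have sum_mod : \sum_(0 <= t < m) (a * t %% m) = \sum_(0 <= t < m) t.
  by rewrite /index_iota subn0 -[RHS](perm_big _ (perm_iota_mulmod coam)) big_map.
have divmod : a * \sum_(0 <= t < m) t =
    m * \sum_(0 <= t < m) (a * t %/ m) + \sum_(0 <= t < m) t.
  rewrite -[X in _ + X]sum_mod !big_distrr -big_split; apply: eq_bigr => t _ /=.
  by rewrite [m * _]mulnC -divn_eq.
move: divmod (mul2_sum_nat m); set S := \sum_(0 <= t < m) t.
set Q := \sum_(0 <= t < m) _ => divmod twoS.
by apply/eqP; rewrite -(eqn_pmul2l m_gt0) -subn1; apply/eqP; nia.
Qed.

Lemma has_genus_apery (S : nat -> Prop) m (w : nat -> nat) : 0 < m ->
  perm_eq [seq w t %% m | t <- iota 0 m] (iota 0 m) ->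
  (forall t x, t < m -> x = w t %[mod m] -> S x <-> w t <= x) ->
  has_genus S (\sum_(0 <= t < m) w t %/ m).
Proof.
move=> m_gt0 perm_w Sw.
have w_inj : {in gtn m &, injective (fun t => w t %% m)}.
  by apply/mkseq_uniqP; rewrite /mkseq (perm_uniq perm_w) iota_uniq.
exists [seq m * j + w t %% m | t <- iota 0 m, j <- iota 0 (w t %/ m)].
split; [|split].
- apply: allpairs_uniq_dep => [|t _|]; rewrite ?iota_uniq //.
  move=> _ _ /allpairsPdep[t1 [j1 [t1m _ ->]]] /allpairsPdep[t2 [j2 [t2m _ ->]]] /= E.
  move: t1m t2m; rewrite !mem_iota => /andP[_ t1m] /andP[_ t2m].
  have Ew : w t1 %% m = w t2 %% m.
    by have := congr1 (modn^~ m) E; rewrite /= !(mulnC m) !modnMDl !modn_mod.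
  rewrite -(w_inj _ _ t1m t2m Ew) in E *.
  by move/eqP: E; rewrite eqn_add2r eqn_pmul2l // => /eqP ->.
- move=> x; split.
  + case/allpairsPdep => t [j [tm jw ->]].
    move: tm jw; rewrite !mem_iota => /andP[_ tm] /andP[_ jw].
    have xw : m * j + w t %% m = w t %[mod m] by rewrite mulnC modnMDl modn_mod.
    move/(Sw t _ tm xw); apply/negP; rewrite -ltnNge {2}(divn_eq (w t) m).
    by rewrite ltn_add2r mulnC ltn_pmul2r.
  + move=> Sx; have : x %% m \in [seq w t %% m | t <- iota 0 m].
      by rewrite (perm_mem perm_w) mem_iota ltn_mod m_gt0.
    case/mapP => t tm xw; have tm' : t < m by move: tm; rewrite mem_iota.
    have lt_xw : x < w t by rewrite ltnNge; apply/negP => /(Sw t x tm' xw)/Sx.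
    apply/allpairsPdep; exists t, (x %/ m); split => //.
      rewrite mem_iota /= -(ltn_pmul2l m_gt0) -(ltn_add2r (x %% m)).
      by rewrite {2}xw !(mulnC m) -!divn_eq.
    by rewrite -xw mulnC -divn_eq.
- rewrite size_allpairs_dep /index_iota subn0 sumnE big_map.
  by apply: eq_bigr => t _; rewrite size_iota.
Qed.

(* For b > 1 the terms with k >= M vanish (legendre_widen). *)
Definition legendre (b M : nat) : nat := \sum_(k < M) M %/ b ^ k.+1.

(* The least M with t <= legendre b M, as long as t <= legendre b L. *)
Definition legendre_inv (b L t : nat) : nat :=
  find (fun M => t <= legendre b M) (iota 0 L).

Inductive powsum (b : nat) : nat -> nat -> Prop :=
  | powsum0 : powsum b 0 0
  | powsumS i M t : powsum b M t -> powsum b (b ^ i + M) (legendre b (b ^ i) + t).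

Section Legendre.

Variable b : nat.
Hypothesis b_gt1 : 1 < b.
Local Notation D := (legendre b).

Lemma legendre_widen M N : M <= N -> \sum_(k < N) M %/ b ^ k.+1 = D M.
Proof.
move=> le_MN; rewrite /legendre (big_ord_widen N (fun k => M %/ b ^ k.+1) le_MN).
rewrite [RHS]big_mkcond /=.
apply: eq_bigr => k _; case: ltnP => // le_Mk.
by rewrite divn_small // (leq_ltn_trans le_Mk) // (ltn_trans (ltnSn k)) // ltn_expl.
Qed.

Lemma legendre_rec M : D M = M %/ b + D (M %/ b).
Proof.
case: M => [|M]; first by rewrite div0n.
have le_M : M.+1 %/ b <= M by rewrite -ltnS ltn_Pdiv // ltnW.
rewrite -(legendre_widen le_M) /legendre big_ord_recl expn1; congr (_ + _).
by apply: eq_bigr => k _; rewrite lift0 expnS divnMA.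
Qed.

Lemma legendre_mulnD Q r : r < b -> D (b * Q + r) = Q + D Q.
Proof.
move=> lt_rb; rewrite legendre_rec mulnC divnMDl ?(ltnW b_gt1) //.
by rewrite divn_small // addn0.
Qed.

Lemma legendre_small r : r < b -> D r = 0.
Proof. by move/(legendre_mulnD 0); rewrite muln0 add0n => ->; apply: big_ord0. Qed.

Lemma leq_legendre M N : M <= N -> D M <= D N.
Proof.
move=> le_MN; rewrite -(legendre_widen le_MN) /legendre.
by apply: leq_sum => k _; apply: leq_div2r.
Qed.

Lemma legendre_superadd M N : D M + D N <= D (M + N).
Proof.
rewrite -(legendre_widen (leq_addr N M)) -(legendre_widen (leq_addl M N)).
rewrite -big_split /legendre; apply: leq_sum => k _ /=.
by rewrite divnD ?expn_gt0 ?(ltnW b_gt1) // leq_addr.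
Qed.

Lemma leq_legendre_muln Q : Q <= D (b * Q).
Proof. by rewrite -[b * Q]addn0 legendre_mulnD ?(ltnW b_gt1) // leq_addr. Qed.

Lemma legendre_expS i : D (b ^ i.+1) = b ^ i + D (b ^ i).
Proof. by rewrite expnS -[b * _]addn0 legendre_mulnD // (ltnW b_gt1). Qed.

Lemma legendre_exp i : (b - 1) * D (b ^ i) + 1 = b ^ i.
Proof.
elim: i => [|i IH]; first by rewrite expn0 legendre_small ?muln0.
rewrite legendre_expS mulnDr -addnA IH expnS; case: b b_gt1 => // c _; nia.
Qed.

Lemma legendre_invP L t M : t <= D L -> (legendre_inv b L t <= M) = (t <= D M).
Proof.
move=> le_tL; rewrite /legendre_inv; set P := fun M => t <= D M.
have le_find : find P (iota 0 L) <= L.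
  by rewrite -[X in _ <= X](size_iota 0 L) find_size.
apply/idP/idP => [le_fM|le_tM].
  apply: leq_trans _ (leq_legendre le_fM).
  have [lt_fL|ge_fL] := ltnP (find P (iota 0 L)) L.
    have has_P : has P (iota 0 L) by rewrite has_find size_iota.
    by have := nth_find 0 has_P; rewrite nth_iota.
  by have -> : find P (iota 0 L) = L by apply/anti_leq; rewrite le_find ge_fL.
rewrite leqNgt; apply/negP => lt_Mf.
have := before_find 0 lt_Mf; rewrite nth_iota ?(leq_trans lt_Mf le_find) //.
by rewrite add0n /P le_tM.
Qed.

Lemma sum_legendre_inv L :
  \sum_(0 <= t < (D L).+1) legendre_inv b L t + \sum_(0 <= M < L) D M = L * D L.
Proof.
have inv_count t : t <= D L -> legendre_inv b L t = \sum_(0 <= M < L) (D M < t).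
  move=> le_tL; have le_invL : legendre_inv b L t <= L by rewrite legendre_invP.
  rewrite -[LHS](sum_nat_ltn le_invL); apply: eq_bigr => M _.
  by rewrite ltnNge legendre_invP // -ltnNge.
under eq_big_nat => t /andP[_ lt_t] do rewrite (inv_count t lt_t).
rewrite exchange_big_nat -big_split /=.
transitivity (\sum_(0 <= M < L) D L); last by rewrite sum_nat_const_nat subn0.
apply: eq_big_nat => M /andP[_ lt_ML]; have le_ML := leq_legendre (ltnW lt_ML).
by rewrite sum_nat_gtn ?ltnS // subSS subnK.
Qed.

Lemma sum_legendre_block N r : r <= b ->
  \sum_(b * N <= M < b * N + r) D M = r * (N + D N).
Proof.
move=> le_rb; rewrite -{1}[b * N]add0n big_addn addKn.
transitivity (\sum_(0 <= i < r) (N + D N)); last by rewrite sum_nat_const_nat subn0.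
apply: eq_big_nat => i /andP[_ lt_ir].
by rewrite addnC legendre_mulnD // (leq_trans lt_ir le_rb).
Qed.

Lemma sum_legendre_muln N :
  2 * \sum_(0 <= M < b * N) D M + b * N = b * (2 * \sum_(0 <= M < N) D M) + b * (N * N).
Proof.
elim: N => [|N IH]; first by rewrite !big_geq ?muln0.
rewrite mulnSr (big_cat_nat (leq0n _) (leq_addr b _)) /= sum_legendre_block //.
rewrite big_nat_recr //=; move: IH.
move: (\sum_(0 <= M < b * N) D M) (\sum_(0 <= M < N) D M) (D N) => X Y Z; nia.
Qed.

Lemma sqn_sub1_divmod : b ^ 2 - 1 = b * (b - 1) + (b - 1).
Proof. by case: b b_gt1 => // c _; nia. Qed.

Lemma sum_legendre_pred_sq :
  2 * \sum_(0 <= M < b ^ 2 - 1) D M + 2 * (b - 1) = (b - 1) * b ^ 2.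
Proof.
have small : \sum_(0 <= M < b - 1) D M = 0.
  have := sum_legendre_block 0 (leq_subr 1 b); rewrite muln0 add0n => ->.
  by rewrite legendre_small ?muln0 // (ltnW b_gt1).
have := sum_legendre_muln (b - 1); rewrite small !muln0 ?add0n.
rewrite sqn_sub1_divmod (big_cat_nat (leq0n _) (leq_addr _ _)) /=.
rewrite sum_legendre_block ?leq_subr //.
rewrite legendre_small ?addn0; last by rewrite ltn_subrL (ltnW b_gt1).
set X := \sum_(0 <= M < b * (b - 1)) D M; case: b b_gt1 => // c _; nia.
Qed.

Lemma powsum_shift M t : powsum b M t -> powsum b (b * M) (M + t).
Proof.
elim=> [|i M' t' _ IH]; first by rewrite muln0; apply: powsum0.
have := powsumS i.+1 IH; rewrite legendre_expS expnS.
by rewrite mulnDr -!addnA (addnCA M').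
Qed.

Lemma powsum_addl k M t : powsum b M t -> powsum b (k + M) t.
Proof.
move=> hMt; elim: k => [//|k IH].
by have := powsumS 0 IH; rewrite expn0 legendre_small // add0n add1n.
Qed.

Lemma legendre_powsum M t : t <= D M -> powsum b M t.
Proof.
elim/ltn_ind: M t => M IH t le_tM; case: M IH le_tM => [|M] IH le_tM.
  by move: le_tM; rewrite /legendre big_ord0 leqn0 => /eqP ->; apply: powsum0.
have [le_tM'|lt_M't] := leqP t (D M).
  exact: (powsum_addl 1 (IH M (ltnSn M) t le_tM')).
set Q := M.+1 %/ b.
have le_Qt : Q <= t.
  have le_bQM : b * Q.-1 <= M.
    have := leq_trunc_div M.+1 b; rewrite -/Q -subn1 mulnBr muln1 mulnC.
    move: (b * Q) => bQ; lia.
  have := leq_trans (leq_legendre_muln Q.-1) (leq_legendre le_bQM); lia.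
have lt_QM : Q < M.+1 by rewrite ltn_Pdiv // ltnW.
have le_tQ : t - Q <= D Q by rewrite leq_subLR -legendre_rec.
have := powsum_addl (M.+1 %% b) (powsum_shift (IH Q lt_QM (t - Q) le_tQ)).
by rewrite subnKC // [b * Q]mulnC addnC -divn_eq.
Qed.

Lemma legendre_bound n : D ((b ^ 2 - 1) * b ^ n) = (b + 1) * b ^ n - 2.
Proof.
elim: n => [|n IH].
  rewrite expn0 !muln1 sqn_sub1_divmod !legendre_mulnD; last first.
    by rewrite ltn_subrL (ltnW b_gt1).
  by rewrite legendre_small ?addn0; [lia|rewrite ltn_subrL (ltnW b_gt1)].
rewrite (expnS b n) mulnCA -[b * _]addn0 legendre_mulnD ?(ltnW b_gt1) // IH.
have := expn_gt0 b n; rewrite (ltnW b_gt1); move: (b ^ n) => X X_gt0.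
case: b b_gt1 => // c _; nia.
Qed.

End Legendre.

Definition multiplicity b n := (b + 1) * b ^ n - 1.

Section Semigroup.

Variables b n : nat.
Hypothesis b_gt1 : 1 < b.
Local Notation D := (legendre b).
Local Notation m := (multiplicity b n).
Local Notation L := ((b ^ 2 - 1) * b ^ n).

Lemma multiplicity_gt1 : 1 < m.
Proof.
have : 0 < b ^ n by rewrite expn_gt0 (ltnW b_gt1).
by rewrite /multiplicity; move: (b ^ n) => X; nia.
Qed.

Lemma legendre_bound_multiplicity : (D L).+1 = m.
Proof.
have := multiplicity_gt1; rewrite legendre_bound // /multiplicity.
move: ((b + 1) * b ^ n) => X; lia.
Qed.

Lemma s_gen_legendre i : s_gen b n i = m * b ^ i + (b - 1) * D (b ^ i).
Proof.
rewrite /s_gen /multiplicity expnD mulnA.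
have := legendre_exp b_gt1 i.
have : 0 < (b + 1) * b ^ n by rewrite muln_gt0 addn1 expn_gt0 (ltnW b_gt1).
move: ((b + 1) * b ^ n) (b ^ i) ((b - 1) * D (b ^ i)) => Z X Y Z_gt0 <-.
rewrite mulnBl mul1n; have := leq_pmull (Y + 1) Z_gt0; lia.
Qed.

Lemma T_legendre x : T b n x <-> exists M t, t <= D M /\ x = m * M + (b - 1) * t.
Proof.
rewrite /T; split.
- elim=> [|_ y [i ->] _ [M [t [le_tM ->]]]]; first by exists 0, 0; rewrite !muln0.
  exists (b ^ i + M), (D (b ^ i) + t); split.
    exact: leq_trans (leq_add (leqnn _) le_tM) (legendre_superadd b_gt1 _ _).
  by rewrite s_gen_legendre !mulnDr; lia.
- case=> M [t [/(legendre_powsum b_gt1) + ->]].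
  elim=> [|i M' t' _ IH]; first by rewrite !muln0; apply: sm_zero.
  have -> : m * (b ^ i + M') + (b - 1) * (D (b ^ i) + t') =
            s_gen b n i + (m * M' + (b - 1) * t').
    by rewrite s_gen_legendre !mulnDr; lia.
  by apply: sm_add; first exists i.
Qed.

Lemma coprime_multiplicity : coprime (b - 1) m.
Proof.
have := legendre_exp b_gt1 n; rewrite /multiplicity.
move: (b ^ n) (D (b ^ n)) => X d <-.
have -> : (b + 1) * ((b - 1) * d + 1) - 1 = ((b + 1) * d + 1) * (b - 1) + 1.
  by case: b b_gt1 => // c _; nia.
by rewrite /coprime gcdnMDl gcdn1.
Qed.

Definition apery t := m * legendre_inv b L t + (b - 1) * t.

Lemma T_apery t x : t < m -> x = apery t %[mod m] -> T b n x <-> apery t <= x.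
Proof.
move=> lt_tm x_mod; have m_gt0 : 0 < m := ltnW multiplicity_gt1.
have le_tL : t <= D L by rewrite -ltnS legendre_bound_multiplicity.
have le_t_inv : t <= D (legendre_inv b L t) by rewrite -(legendre_invP b_gt1 _ le_tL).
rewrite T_legendre; split => [[M [t' [le_t'M x_eq]]]|le_ax].
- have : (b - 1) * t' = (b - 1) * t %[mod m].
    by move: x_mod; rewrite x_eq /apery ![m * _]mulnC !modnMDl.
  rewrite -modnMmr.
  move/(coprime_mulmod_inj coprime_multiplicity (ltn_pmod _ m_gt0) lt_tm) => mod_t'.
  have t'_eq : t' = t' %/ m * m + t by rewrite {1}(divn_eq t' m) mod_t'.
  have le_inv : legendre_inv b L t <= M + (b - 1) * (t' %/ m).
    rewrite (legendre_invP b_gt1 _ le_tL).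
    apply: leq_trans (leq_legendre b_gt1 (leq_addr _ M)).
    by apply: leq_trans le_t'M; rewrite [X in _ <= X]t'_eq leq_addl.
  rewrite x_eq [X in _ <= _ + _ * X]t'_eq /apery; move: le_inv.
  by move: (legendre_inv b L t) (t' %/ m) => u a; nia.
- exists (legendre_inv b L t + (x - apery t) %/ m), t; split.
    exact: leq_trans le_t_inv (leq_legendre b_gt1 (leq_addr _ _)).
  have x_eq : x = apery t + (x - apery t) %/ m * m.
    rewrite divnK ?subnKC //; rewrite -eqn_mod_dvd //; apply/eqP; exact: x_mod.
  by rewrite {1}x_eq /apery; move: (legendre_inv b L t) ((x - _) %/ m) => u a; nia.
Qed.

Lemma genus_T : has_genus (T b n) (\sum_(0 <= t < m) apery t %/ m).
Proof.
have apery_mod t : apery t %% m = (b - 1) * t %% m by rewrite /apery mulnC modnMDl.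
apply: has_genus_apery; first exact: ltnW multiplicity_gt1.
  by rewrite (eq_map apery_mod); apply: perm_iota_mulmod coprime_multiplicity.
exact: T_apery.
Qed.

Lemma sum_apery_div : \sum_(0 <= t < m) apery t %/ m =
  \sum_(0 <= t < m) legendre_inv b L t + \sum_(0 <= t < m) ((b - 1) * t %/ m).
Proof.
rewrite -big_split; apply: eq_bigr => t _.
by rewrite /apery mulnC divnMDl // ltnW // multiplicity_gt1.
Qed.

Lemma sum_legendre_inv_multiplicity :
  \sum_(0 <= t < m) legendre_inv b L t + \sum_(0 <= M < L) D M = L * (m - 1).
Proof.
by rewrite -legendre_bound_multiplicity subSS subn0; apply: sum_legendre_inv.
Qed.

End Semigroup.

Local Open Scope ring_scope.

Section GenusValue.

Variables b n : nat.
Hypothesis b_gt1 : (1 < b)%N.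
Local Notation B := (b%:R : rat).
Local Notation m := (multiplicity b n).
Local Notation L := ((b ^ 2 - 1) * b ^ n)%N.

Lemma natr_multiplicity : (m%:R : rat) = (B + 1) * B ^+ n - 1.
Proof.
by rewrite natrB ?natrM ?natrD ?natrX // muln_gt0 addn1 expn_gt0 (ltnW b_gt1).
Qed.

Lemma natr_bound : (L%:R : rat) = (B ^+ 2 - 1) * B ^+ n.
Proof. by rewrite natrM natrB ?natrX // expn_gt0 (ltnW b_gt1). Qed.

Lemma natr_sum_legendre_expn k N :
  (B - 1) * (2 * (\sum_(0 <= M < b ^ k * N) legendre b M)%N%:R) =
  B ^+ k * ((B - 1) * (2 * (\sum_(0 <= M < N) legendre b M)%N%:R)
            + N%:R * (N%:R * (B ^+ k - 1) - k%:R * (B - 1))).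
Proof.
elim: k => [|k IH]; first by rewrite expn0 mul1n expr0 subrr; ring.
have := congr1 (fun x => x%:R : rat) (sum_legendre_muln b_gt1 (b ^ k * N)).
rewrite /= mulnA -expnS [(2 * _ + _)%:R]natrD [(b * _ + _)%:R]natrD !natrM !natrX.
move=> /(canRL (addrK _)) ->.
rewrite mulrBr mulrDr [(B - 1) * (B * _)]mulrCA IH !exprS -natr1; ring.
Qed.

Lemma natr_sum_legendre_bound :
  2 * (\sum_(0 <= M < L) legendre b M)%N%:R =
  B ^+ n * ((B - 1) * (B ^+ 2 - 2) + (B ^+ 2 - 1) * ((B + 1) * (B ^+ n - 1) - n%:R)).
Proof.
have B1_neq0 : B - 1 != 0 by rewrite subr_eq0 pnatr_eq1 gtn_eqF.
have := congr1 (fun x => x%:R : rat) (sum_legendre_pred_sq b_gt1).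
rewrite /= [(2 * _ + _)%:R]natrD !natrM natrB ?natrX ?(ltnW b_gt1) //.
move=> /(canRL (addrK _)) base.
apply: (mulfI B1_neq0); rewrite [L]mulnC natr_sum_legendre_expn base.
by rewrite natrB ?natrX ?expn_gt0 ?(ltnW b_gt1) //; ring.
Qed.

Lemma natr_sum_quotients :
  2 * (\sum_(0 <= t < m) ((b - 1) * t %/ m))%N%:R = (B - 2) * ((B + 1) * B ^+ n - 2).
Proof.
rewrite -natrM sum_divn_coprime ?coprime_multiplicity //.
have -> : ((b - 1).-1 * m.-1 = (b - 2) * (m - 1))%N by rewrite -!subn1 -subnDA.
rewrite natrM (natrB _ b_gt1) (natrB _ (ltnW (multiplicity_gt1 n b_gt1))).
by rewrite natr_multiplicity; ring.
Qed.

Lemma natr_sum_legendre_inv :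
  (\sum_(0 <= t < m) legendre_inv b L t)%N%:R =
  (B ^+ 2 - 1) * B ^+ n * ((B + 1) * B ^+ n - 2)
  - (\sum_(0 <= M < L) legendre b M)%N%:R.
Proof.
apply: (canRL (addrK _)); rewrite -natrD sum_legendre_inv_multiplicity //.
rewrite natrM (natrB _ (ltnW (multiplicity_gt1 n b_gt1))).
by rewrite natr_bound natr_multiplicity; ring.
Qed.

End GenusValue.

Theorem mainTheorem2 (b n : nat) (hb : (2 <= b)%N) :
  exists g : nat, has_genus (T b n) g /\
    2%:R * (g%:R : rat) =
      ((b%:R ^+ 3 + b%:R ^+ 2 - b%:R - 1) * b%:R ^+ (2 * n)
       + ((n%:R - 1) * (b%:R ^+ 2 - 1) - 2%:R) * b%:R ^+ n
       - 2%:R * b%:R + 4%:R).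
Proof.
exists (\sum_(0 <= t < multiplicity b n) apery b n t %/ multiplicity b n)%N.
split; first exact: genus_T.
rewrite sum_apery_div // natrD mulrDr natr_sum_quotients // natr_sum_legendre_inv //.
rewrite mulrBr natr_sum_legendre_bound // mulnC exprM.
by ring.
Qed.
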